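(* Let $x$ and $y$ be sequences of length $n$ such that $y=\tau(x,i)$ for some $i\in\{1,\ldots,n-1\}$. For every $j\in\{1,\ldots,n\}\setminus\{i,i+1\}$: if $\overrightarrow{PD}_x[j]\notin\{j-i-1,\,j-i\}$ then $\overrightarrow{PD}_x[j]=\overrightarrow{PD}_y[j]$; and if $\overleftarrow{PD}_x[j]\notin\{i-j,\,i+1-j\}$ then $\overleftarrow{PD}_x[j]=\overleftarrow{PD}_y[j]$.
   Context: Sequences are finite sequences of pairwise distinct integers indexed from $1$. For $1\le i\le n-1$, $\tau(x,i)$ is obtained from $x$ by exchanging $x[i]$ and $x[i+1]$. The parent-distance table of $x$ is $\overrightarrow{PD}_x[k]=k-\max\{j<k : x[j]<x[k]\}$ if such $j$ exists and $0$ otherwise; the reverse parent-distance table is $\overleftarrow{PD}_x[k]=\min\{j : k<j\le n,\ x[j]<x[k]\}-k$ if such $j$ exists and $0$ otherwise. *)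

From mathcomp Require Import all_boot all_order all_algebra.
Set Implicit Arguments. Unset Strict Implicit. Unset Printing Implicit Defensive.
Import Order.TTheory GRing.Theory Num.Theory.

(* Sequences are seq int; positions are 1-based: x[k] = nth 0 x (k-1). *)
Definition at1 (x : seq int) (k : nat) : int := nth 0%R x k.-1.

Definition tau (x : seq int) (i : nat) : seq int :=
  set_nth 0%R (set_nth 0%R x i.-1 (at1 x i.+1)) i (at1 x i).

Definition fpd (x : seq int) (k : nat) : nat :=
  let P := fun j => (at1 x j < at1 x k)%R in
  if has P (iota 1 k.-1)
  then k - \max_(j <- iota 1 k.-1 | P j) j
  else 0.

Definition rpd (x : seq int) (k : nat) : nat :=
  let P := fun j => (at1 x j < at1 x k)%R in
  if has P (iota k.+1 (size x - k))
  then \big[minn/size x]_(j <- iota k.+1 (size x - k) | P j) j - k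
  else 0.

From mathcomp Require Import all_boot all_order all_algebra zify.
Import Order.TTheory GRing.Theory Num.Theory.

(* Exchanging x[i] and x[i+1] relabels positions by the adjacent transposition
   sigma = (i i+1).  For j outside {i, i+1}, the window [1, j) (resp. (j, n])
   contains either both or neither of i, i+1, so the positions of the window
   holding a value below x[j] in y are the sigma-images of those in x.  The
   parent of j is the largest (resp. smallest) such position, and sigma fixes
   it unless it is i or i+1, which is exactly the excluded case.  Distinctness
   of the entries is never used. *)

Definition adjswap (i k : nat) : nat :=
  if k == i then i.+1 else if k == i.+1 then i else k.

Section AdjacentSwap.
Context {i : nat}.

Lemma adjswap_id k : k != i -> k != i.+1 -> adjswap i k = k.
Proof. by rewrite /adjswap => /negbTE-> /negbTE->. Qed.

Lemma adjswapK : involutive (adjswap i).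
Proof.
move=> k; rewrite /adjswap.
case: (eqVneq k i) => [->|ki]; first by rewrite eqSS (gtn_eqF (ltnSn i)) eqxx.
case: (eqVneq k i.+1) => [->|ki1]; first by rewrite eqxx.
by rewrite (negbTE ki) (negbTE ki1).
Qed.

Lemma adjswap_leq {k m} : m != i -> adjswap i k <= m -> k <= m.
Proof.
by move=> /eqP; rewrite /adjswap; case: (eqVneq k i) => [->|_]; [|case: eqVneq]; lia.
Qed.

Lemma leq_adjswap {k m} : m != i.+1 -> m <= adjswap i k -> m <= k.
Proof.
by move=> /eqP; rewrite /adjswap; case: (eqVneq k i) => [->|_]; [|case: eqVneq]; lia.
Qed.

Lemma mem_adjswap (s : seq nat) k :
  (i \in s) = (i.+1 \in s) -> (adjswap i k \in s) = (k \in s).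
Proof.
by rewrite /adjswap => hs; case: eqVneq => [->|_]; [|case: eqVneq => [->|]].
Qed.

End AdjacentSwap.

Lemma mem_big_select (T : eqType) (op : T -> T -> T) (d : T) (s : seq T) (P : pred T) :
  (forall a b, op a b = a \/ op a b = b) -> {in s, forall a, op a d = a} ->
  has P s -> \big[op/d]_(a <- s | P a) a \in [seq a <- s | P a].
Proof.
move=> op_sel; elim: s => [//|a s IHs] opd /=; rewrite big_cons.
have opd_s : {in s, forall b, op b d = b}.
  by move=> b bs; apply: opd; rewrite inE bs orbT.
have {}IHs := IHs opd_s.
case: ifP => Pa /=; last exact: IHs.
case hs: (has P s) => _.
  by case: (op_sel a (\big[op/d]_(b <- s | P b) b)) => ->; rewrite inE ?eqxx ?IHs ?orbT.
by rewrite big_hasC ?hs // opd ?mem_head.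
Qed.

Lemma bigmax_mem_filter {s : seq nat} {P : pred nat} :
  has P s -> \max_(k <- s | P k) k \in [seq k <- s | P k].
Proof.
apply: mem_big_select => [a b|a _]; last exact: maxn0.
by case: (leqP a b) => [/maxn_idPr|/ltnW/maxn_idPl]; [right|left].
Qed.

Lemma bigmin_mem_filter {s : seq nat} {P : pred nat} {d : nat} :
  {in s, forall k, k <= d} -> has P s ->
  \big[minn/d]_(k <- s | P k) k \in [seq k <- s | P k].
Proof.
move=> le_s_d; apply: mem_big_select => [a b|a /le_s_d/minn_idPl] //.
by case: (leqP a b) => [/minn_idPl|/ltnW/minn_idPr]; [left|right].
Qed.

Lemma bigmin_leq_seq (s : seq nat) (P : pred nat) d k :
  k \in s -> P k -> \big[minn/d]_(j <- s | P j) j <= k.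
Proof. by rewrite -minEnat; exact: (ge_bigmin_seq d k P id). Qed.

Lemma leq_bigmin_seq (s : seq nat) (P : pred nat) d m : m <= d ->
  (forall k, k \in s -> P k -> m <= k) -> m <= \big[minn/d]_(k <- s | P k) k.
Proof.
move=> le_md le_m_s; rewrite big_seq_cond.
by elim/big_ind: _ => // [a b|k /andP[]]; [rewrite leq_min => ->|exact: le_m_s].
Qed.

Section SwappedWindow.
Context {s : seq nat} {P Q : pred nat} {i : nat}.
Hypothesis swap_closed : (i \in s) = (i.+1 \in s).
Hypothesis eqQ : {in s, forall k, Q k = P (adjswap i k)}.

Lemma has_adjswap : has Q s = has P s.
Proof.
apply/hasP/hasP => [[k ks Qk]|[k ks Pk]].
  by exists (adjswap i k); rewrite ?mem_adjswap // -eqQ.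
by exists (adjswap i k); rewrite ?eqQ ?adjswapK ?mem_adjswap.
Qed.

Lemma bigmax_adjswap : has P s ->
  \max_(k <- s | P k) k != i -> \max_(k <- s | P k) k != i.+1 ->
  \max_(k <- s | Q k) k = \max_(k <- s | P k) k.
Proof.
move=> /bigmax_mem_filter; set M := \max_(k <- s | P k) k.
rewrite mem_filter => /andP[PM Ms] Mi Mi1.
apply/eqP; rewrite eqn_leq; apply/andP; split.
  apply/bigmax_leqP_seq => k ks Qk; apply: (adjswap_leq Mi).
  by apply: leq_bigmax_seq; rewrite ?mem_adjswap // -eqQ.
by apply: leq_bigmax_seq; rewrite // eqQ // adjswap_id.
Qed.

Lemma bigmin_adjswap {d : nat} : {in s, forall k, k <= d} -> has P s ->
  \big[minn/d]_(k <- s | P k) k != i -> \big[minn/d]_(k <- s | P k) k != i.+1 ->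
  \big[minn/d]_(k <- s | Q k) k = \big[minn/d]_(k <- s | P k) k.
Proof.
move=> le_s_d /(bigmin_mem_filter le_s_d); set M := \big[minn/d]_(k <- s | P k) k.
rewrite mem_filter => /andP[PM Ms] Mi Mi1.
apply/eqP; rewrite eqn_leq; apply/andP; split.
  by apply: bigmin_leq_seq; rewrite // eqQ // adjswap_id.
apply: leq_bigmin_seq => [|k ks Qk]; first exact: le_s_d.
by apply: (leq_adjswap Mi1); apply: bigmin_leq_seq; rewrite ?mem_adjswap // -eqQ.
Qed.

End SwappedWindow.

Lemma at1_tau x i k : 0 < i -> 0 < k -> at1 (tau x i) k = at1 x (adjswap i k).
Proof.
case: i => // i _; case: k => // k _.
rewrite /tau /at1 /adjswap /= !nth_set_nth /= !eqSS.
case: (eqVneq k i) => [->|ki]; first by rewrite ltn_eqF // nth_set_nth /= eqxx.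
by case: (eqVneq k i.+1) => // _; rewrite nth_set_nth /= (negbTE ki).
Qed.

Lemma size_tau x i : i < size x -> size (tau x i) = size x.
Proof. by move=> lt_i_x; rewrite /tau !size_set_nth; lia. Qed.

(* With the convention that a missing parent has distance 0, [fpd x j + i != j]
   says that the parent of j is not at position i; likewise for [rpd]. *)
Lemma fpd_tau x i j : 0 < i -> 0 < j -> j != i -> j != i.+1 ->
  fpd x j + i != j -> fpd x j + i.+1 != j -> fpd (tau x i) j = fpd x j.
Proof.
move=> i_gt0 j_gt0 ji ji1; rewrite /fpd [at1 (tau x i) j]at1_tau // adjswap_id //.
set s := iota 1 j.-1; pose P k := (at1 x k < at1 x j)%R.
have swap_s : (i \in s) = (i.+1 \in s) by rewrite !mem_iota; lia.
have eqQ : {in s, forall k, (at1 (tau x i) k < at1 x j)%R = P (adjswap i k)}.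
  by move=> k; rewrite mem_iota => /andP[k_gt0 _]; rewrite at1_tau.
rewrite (has_adjswap swap_s eqQ); case: ifP => // hP /eqP ni /eqP ni1.
have := bigmax_mem_filter hP; rewrite mem_filter mem_iota => /andP[_ M_in_s].
by rewrite (bigmax_adjswap swap_s eqQ hP) //;
  apply/eqP; move: M_in_s; rewrite /P; lia.
Qed.

Lemma rpd_tau x i j : 0 < i -> i < size x -> 0 < j -> j != i -> j != i.+1 ->
  rpd x j + j != i -> rpd x j + j != i.+1 -> rpd (tau x i) j = rpd x j.
Proof.
move=> i_gt0 lt_i_x j_gt0 ji ji1.
rewrite /rpd size_tau // [at1 (tau x i) j]at1_tau // adjswap_id //.
set s := iota j.+1 (size x - j); pose P k := (at1 x k < at1 x j)%R.
have swap_s : (i \in s) = (i.+1 \in s) by rewrite !mem_iota; lia.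
have le_s_x : {in s, forall k, k <= size x} by move=> k; rewrite mem_iota; lia.
have eqQ : {in s, forall k, (at1 (tau x i) k < at1 x j)%R = P (adjswap i k)}.
  by move=> k; rewrite mem_iota => /andP[lt_jk _]; rewrite at1_tau //; lia.
rewrite (has_adjswap swap_s eqQ); case: ifP => // hP /eqP ni /eqP ni1.
have := bigmin_mem_filter le_s_x hP; rewrite mem_filter mem_iota => /andP[_ M_in_s].
by rewrite (bigmin_adjswap swap_s eqQ le_s_x hP) //;
  apply/eqP; move: M_in_s; rewrite /P; lia.
Qed.

Theorem lemma12 (x y : seq int) (i : nat) :
  uniq x -> y = tau x i -> 1 <= i <= (size x).-1 ->
  forall j : nat, 1 <= j <= size x -> j != i -> j != i.+1 ->
    (~ ((Posz (fpd x j) = (Posz j - Posz i - 1)%R) \/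
        (Posz (fpd x j) = (Posz j - Posz i)%R)) ->
       fpd x j = fpd y j) /\
    (~ ((Posz (rpd x j) = (Posz i - Posz j)%R) \/
        (Posz (rpd x j) = (Posz i.+1 - Posz j)%R)) ->
       rpd x j = rpd y j).
Proof.
move=> _ -> /andP[i_gt0 le_i_x] j /andP[j_gt0 _] ji ji1.
have lt_i_x : i < size x by lia.
split=> excluded; apply/esym.
  by apply: fpd_tau => //; apply/eqP => eq_j; apply: excluded; lia.
by apply: rpd_tau => //; apply/eqP => eq_i; apply: excluded; lia.
Qed.
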